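(* There is an admissible set $T' \subseteq \{0,1,2\}^{1562}$ such that $|T'| = 142 \cdot 37 \cdot \binom{11}{7}^{141}$ and every $t \in T'$ has weight $990$.
   Context: A set $S\subseteq\{0,1,2\}^m$ is admissible if (1) for all distinct $s,s'\in S$ there are coordinates $i,j$ with $s_i=0\neq s'_i$ and $s_j\neq 0=s'_j$; and (2) for all distinct $s,s',s''\in S$ there is a coordinate $k$ such that the multiset $\{s_k,s'_k,s''_k\}$ equals $\{0,1,2\}$, $\{0,0,1\}$ or $\{0,0,2\}$. The weight of a vector is its number of nonzero coordinates. *)

From mathcomp Require Import all_boot.
Set Implicit Arguments. Unset Strict Implicit. Unset Printing Implicit Defensive.

Definition vec (m : nat) := {ffun 'I_m -> 'I_3}.

Definition z0 : 'I_3 := @Ordinal 3 0 isT.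
Definition z1 : 'I_3 := @Ordinal 3 1 isT.
Definition z2 : 'I_3 := @Ordinal 3 2 isT.

Definition weight (m : nat) (s : vec m) : nat := #|[set i | s i != z0]|.

Definition cond1 (m : nat) (s s' : vec m) : Prop :=
  (exists i, s i = z0 /\ s' i <> z0) /\ (exists j, s j <> z0 /\ s' j = z0).

Definition good_triple (a b c : 'I_3) : Prop :=
  perm_eq [:: a; b; c] [:: z0; z1; z2] \/
  perm_eq [:: a; b; c] [:: z0; z0; z1] \/
  perm_eq [:: a; b; c] [:: z0; z0; z2].

Definition admissible (m : nat) (S : {set vec m}) : Prop :=
  (forall s s', s \in S -> s' \in S -> s <> s' -> cond1 s s') /\
  (forall s s' s'', s \in S -> s' \in S -> s'' \in S ->
     s <> s' -> s <> s'' -> s' <> s'' ->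
     exists k, good_triple (s k) (s' k) (s'' k)).

(* Cut the 1562 = 142 * 11 coordinates into 142 blocks of 11 and take three
   sets of vectors in {0,1,2}^11: an admissible set A of C(11,7) vectors of
   weight 7, the set A' obtained from A by swapping the symbols 1 and 2, and an
   admissible set B of 37 vectors of weight 3.  T' is the set of concatenations
   with a vector of B in some block p, vectors of A before p and vectors of A'
   after p; there are 142 * 37 * C(11,7)^141 of them, all of weight
   141 * 7 + 3.  Two members with the same pivot p differ in a block where both
   come from the same admissible set; otherwise the B-block of one faces an A-
   or A'-block of the other.  For three members with pivots p1 <= p2 <= p3,
   block p2 holds a triple in A' x B x A when the pivots are distinct and in
   B x B x (A u A') when two of them coincide.  So it suffices that every
   b in B vanishes somewhere a given a in A u A' does not, and that all these
   mixed triples are good, which is checked by computation. *)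

From mathcomp Require Import all_boot ssralg zmodp.
Set Implicit Arguments. Unset Strict Implicit. Unset Printing Implicit Defensive.
Import GRing.Theory.

Definition zero_in (m : nat) (s s' : vec m) : Prop := exists k, s k = z0 /\ s' k <> z0.

Definition good_at (m : nat) (s s' s'' : vec m) : Prop :=
  exists k, good_triple (s k) (s' k) (s'' k).

(* Written as a match on the values so that it runs fast under vm_compute. *)
Definition good_tripleb (a b c : 'I_3) : bool :=
  match nat_of_ord a, nat_of_ord b, nat_of_ord c with
  | 0, 0, 0 => false
  | 0, 0, _ | 0, _, 0 | _, 0, 0 => true
  | 0, 1, 2 | 0, 2, 1 | 1, 0, 2 | 1, 2, 0 | 2, 0, 1 | 2, 1, 0 => true
  | _, _, _ => false
  end.

Lemma good_tripleP a b c : reflect (good_triple a b c) (good_tripleb a b c).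
Proof.
rewrite /good_triple.
by case: a b c => [[|[|[|//]]] ?] [[|[|[|//]]] ?] [[|[|[|//]]] ?];
  apply: (iffP idP) => //=; intuition.
Qed.

Lemma good_triple_perm a b c a' b' c' :
  perm_eq [:: a; b; c] [:: a'; b'; c'] -> good_triple a b c -> good_triple a' b' c'.
Proof. by move=> /permPl eq_abc; rewrite /good_triple !eq_abc. Qed.

Lemma good_triple_z0z0 x : x != z0 -> good_triple z0 z0 x.
Proof. by move=> nz_x; apply/good_tripleP; case: x nz_x => [[|[|[|//]]] ?]. Qed.

Lemma good_triple_opp a b c : good_triple a b c -> good_triple (- a)%R (- b)%R (- c)%R.
Proof.
move/good_tripleP => abc; apply/good_tripleP; move: abc.
by case: a b c => [[|[|[|//]]] ?] [[|[|[|//]]] ?] [[|[|[|//]]] ?].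
Qed.

Lemma z0E : z0 = 0%R. Proof. exact: val_inj. Qed.

Section Vectors.
Variable m : nat.
Implicit Types s : vec m.

Lemma opp_vec_eq_z0 s k : ((- s)%R k == z0) = (s k == z0).
Proof. by rewrite ffunE z0E oppr_eq0. Qed.

Lemma cond1_zero_in s s' : cond1 s s' <-> zero_in s s' /\ zero_in s' s.
Proof.
by split=> -[zs [k [nz z]]]; split=> //; exists k.
Qed.

Lemma zero_in_neq s s' : zero_in s s' -> s <> s'.
Proof. by case=> k [z nz] eq_s; apply: nz; rewrite -eq_s. Qed.

Lemma zero_in_oppr s s' : zero_in s s' -> zero_in s (- s')%R.
Proof.
by case=> k [z /eqP nz]; exists k; split=> //; apply/eqP; rewrite opp_vec_eq_z0.
Qed.

Lemma zero_in_opp s s' : zero_in s s' -> zero_in (- s)%R (- s')%R.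
Proof.
case=> k [/eqP z /eqP nz]; exists k.
by split; apply/eqP; rewrite opp_vec_eq_z0.
Qed.

Lemma zero_in_good_at s s' : zero_in s s' -> good_at s s s'.
Proof. by case=> k [z /eqP nz]; exists k; rewrite z; apply: good_triple_z0z0. Qed.

Lemma good_at_swap12 s s' s'' : good_at s s' s'' -> good_at s' s s''.
Proof.
by case=> k abc; exists k; apply: good_triple_perm abc; rewrite (perm_catCA [:: _] [:: _]).
Qed.

Lemma good_at_swap23 s s' s'' : good_at s s' s'' -> good_at s s'' s'.
Proof.
by case=> k abc; exists k; apply: good_triple_perm abc; rewrite perm_cons (perm_catC [:: _]).
Qed.

Lemma good_at_opp s s' s'' : good_at s s' s'' -> good_at (- s)%R (- s')%R (- s'')%R.
Proof. by case=> k abc; exists k; rewrite !ffunE; apply: good_triple_opp. Qed.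

Lemma weight_opp s : weight (- s)%R = weight s.
Proof. by apply: eq_card => k; rewrite !inE opp_vec_eq_z0. Qed.

Lemma admissible_zero_in (S : {set vec m}) s s' :
  admissible S -> s \in S -> s' \in S -> s <> s' -> zero_in s s'.
Proof. by case=> adm1 _ Ss Ss' ne; case/cond1_zero_in: (adm1 s s' Ss Ss' ne). Qed.

Lemma admissible_good_at (S : {set vec m}) s s' s'' :
  admissible S -> s \in S -> s' \in S -> s'' \in S -> ~ (s = s' /\ s' = s'') ->
  good_at s s' s''.
Proof.
move=> admS Ss Ss' Ss'' not_all_eq.
have zero_in_S := admissible_zero_in admS.
have [eq12|ne12] := eqVneq s s'.
  rewrite -eq12; apply/zero_in_good_at/zero_in_S => // eq13.
  by apply: not_all_eq; rewrite -eq12 -eq13.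
have [<-|ne23] := eqVneq s' s''.
  apply/good_at_swap12/good_at_swap23/zero_in_good_at/zero_in_S => //.
  by apply/eqP; rewrite eq_sym.
have [<-|ne13] := eqVneq s s''.
  by apply/good_at_swap23/zero_in_good_at/zero_in_S => //; apply/eqP.
by case: admS => _; apply=> //; apply/eqP.
Qed.

Lemma admissible_opp (I : finType) (F : I -> vec m) :
  admissible [set F x | x : I] -> admissible [set (- F x)%R | x : I].
Proof.
move=> admF; have memF x : F x \in [set F x | x : I] by apply: imset_f.
split.
  move=> _ _ /imsetP[x _ ->] /imsetP[y _ ->] ne.
  have ne' : F x <> F y by move=> eq_F; apply: ne; rewrite eq_F.
  apply/cond1_zero_in; split; apply/zero_in_opp/(admissible_zero_in admF) => //.
  by move/esym.
move=> _ _ _ /imsetP[x _ ->] /imsetP[y _ ->] /imsetP[z _ ->] ne12 ne13 ne23.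
by apply/good_at_opp; case: admF => _; apply=> // eq_F;
  [apply: ne12 | apply: ne13 | apply: ne23]; rewrite eq_F.
Qed.

End Vectors.

Lemma wlog_sorted3 (T : Type) (key : T -> nat) (P : T -> T -> T -> Prop) :
  (forall x y z, P x y z -> P y x z) -> (forall x y z, P x y z -> P x z y) ->
  (forall x y z, key x <= key y <= key z -> P x y z) -> forall x y z, P x y z.
Proof.
move=> P12 P23 sorted x y z.
wlog le_xy : x y / key x <= key y.
  by move=> W; case: (leqP (key x) (key y)) => [/W//|/ltnW/W/P12].
have [le_yz|lt_zy] := leqP (key y) (key z); first by apply/sorted; rewrite le_xy.
apply/P23; have [le_xz|lt_zx] := leqP (key x) (key z).
  by apply/sorted; rewrite le_xz ltnW.
by apply/P12/sorted; rewrite ltnW.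
Qed.

Lemma good_at_wlog_sorted (T : Type) (m : nat) (key : T -> nat) (f : T -> vec m) :
  (forall x y z, key x <= key y <= key z ->
     f x <> f y -> f x <> f z -> f y <> f z -> good_at (f x) (f y) (f z)) ->
  forall x y z, f x <> f y -> f x <> f z -> f y <> f z -> good_at (f x) (f y) (f z).
Proof.
move=> sorted; apply: (wlog_sorted3 (key := key)) => // x y z good_xyz.
  by move=> ne_yx ne_yz ne_xz; apply/good_at_swap12/good_xyz => // /esym.
by move=> ne_xz ne_xy ne_zy; apply/good_at_swap23/good_xyz => // /esym.
Qed.

Section Concat.
Variables n d : nat.
Implicit Types (F G H : 'I_n -> vec d) (c : 'I_n) (k : 'I_d) (i : 'I_(n * d)).

Lemma block_dim_gt0 i : 0 < d.
Proof. by case: d i => [|//] []; rewrite muln0. Qed.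

Lemma block_of_subproof i : i %/ d < n.
Proof. by rewrite ltn_divLR ?(block_dim_gt0 i). Qed.

Definition block_of i : 'I_n := Ordinal (block_of_subproof i).
Definition offset_of i : 'I_d := Ordinal (ltn_pmod i (block_dim_gt0 i)).

Lemma block_index_subproof c k : c * d + k < n * d.
Proof.
rewrite (leq_trans (_ : _ < c.+1 * d)) ?leq_mul2r ?ltn_ord ?orbT //.
by rewrite mulSnr ltn_add2l.
Qed.

Definition block_index c k : 'I_(n * d) := Ordinal (block_index_subproof c k).

Lemma block_of_index c k : block_of (block_index c k) = c.
Proof.
by apply: val_inj; rewrite /= divnMDl ?divn_small ?addn0 ?(block_dim_gt0 (block_index c k)).
Qed.

Lemma offset_of_index c k : offset_of (block_index c k) = k.
Proof. by apply: val_inj; rewrite /= modnMDl modn_small. Qed.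

Lemma block_indexK i : block_index (block_of i) (offset_of i) = i.
Proof. by apply: val_inj; rewrite /= -divn_eq. Qed.

Definition concat F : vec (n * d) := [ffun i => F (block_of i) (offset_of i)].

Lemma concatE F c k : concat F (block_index c k) = F c k.
Proof. by rewrite ffunE block_of_index offset_of_index. Qed.

Lemma concat_eq_block F G c : concat F = concat G -> F c = G c.
Proof. by move=> eqFG; apply/ffunP => k; rewrite -!concatE eqFG. Qed.

Lemma concat_neq F G : concat F <> concat G -> exists c, F c <> G c.
Proof.
move=> neFG; have [c /eqP|same] := pickP (fun c => F c != G c); first by exists c.
by case: neFG; apply/ffunP => i; rewrite !ffunE (eqP (negbFE (same _))).
Qed.

Lemma zero_in_concat F G c : zero_in (F c) (G c) -> zero_in (concat F) (concat G).
Proof. by case=> k zk; exists (block_index c k); rewrite !concatE. Qed.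

Lemma good_at_concat F G H c :
  good_at (F c) (G c) (H c) -> good_at (concat F) (concat G) (concat H).
Proof. by case=> k gk; exists (block_index c k); rewrite !concatE. Qed.

Lemma weightE m (s : vec m) : weight s = \sum_(i < m) (s i != z0).
Proof.
by rewrite /weight -sum1dep_card big_mkcond; apply: eq_bigr => i _; case: ifP.
Qed.

Lemma weight_concat F : weight (concat F) = \sum_c weight (F c).
Proof.
under [RHS]eq_bigr => c _ do rewrite weightE.
rewrite weightE pair_bigA (reindex (fun ck : 'I_n * 'I_d => block_index ck.1 ck.2)) /=.
  by apply: eq_bigr => -[c k] _; rewrite concatE.
exists (fun i => (block_of i, offset_of i)) => [[c k] _|i _] /=.
  by rewrite block_of_index offset_of_index.
exact: block_indexK.
Qed.

End Concat.

Section BlockProduct.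
Variables (d a b n : nat) (A A' : 'I_a -> vec d) (B : 'I_b -> vec d).
Hypotheses (A_inj : injective A) (A'_inj : injective A') (B_inj : injective B).
Hypotheses (A_adm : admissible [set A x | x : 'I_a])
  (A'_adm : admissible [set A' x | x : 'I_a]) (B_adm : admissible [set B j | j : 'I_b]).
Hypothesis B_zero_in : forall j x, zero_in (B j) (A x) /\ zero_in (B j) (A' x).
Hypothesis B_pair_good :
  forall j j' x, good_at (B j) (B j') (A x) /\ good_at (B j) (B j') (A' x).
Hypothesis B_mid_good : forall x j y, good_at (A' x) (B j) (A y).

Definition layout := ('I_n.+1 * 'I_b * {ffun 'I_n -> 'I_a})%type.

Implicit Types (t : layout) (p c : 'I_n.+1).

Definition pivot (t : layout) : 'I_n.+1 := t.1.1.

Definition block (t : layout) (c : 'I_n.+1) : vec d :=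
  match unlift (pivot t) c with
  | None => B t.1.2
  | Some c' => if c < pivot t then A (t.2 c') else A' (t.2 c')
  end.

Definition glue (t : layout) : vec (n.+1 * d) := concat (block t).

Definition block_product : {set vec (n.+1 * d)} := [set glue t | t : layout].

Definition family (p c : 'I_n.+1) : {set vec d} :=
  if c < p then [set A x | x : 'I_a]
  else if p < c then [set A' x | x : 'I_a] else [set B j | j : 'I_b].

Lemma family_admissible p c : admissible (family p c).
Proof. by rewrite /family; case: ifP => _; last case: ifP. Qed.

Lemma block_pivot t : block t (pivot t) = B t.1.2.
Proof. by rewrite /block unlift_none. Qed.

Lemma block_before t c : c < pivot t -> exists x, block t c = A x.
Proof.
rewrite /block; case: unliftP => [c' ->|->]; last by rewrite ltnn.
by move=> ->; exists (t.2 c').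
Qed.

Lemma block_after t c : pivot t < c -> exists x, block t c = A' x.
Proof.
rewrite /block; case: unliftP => [c' ->|->]; last by rewrite ltnn.
by move=> lt_c; rewrite ltnNge ltnW //; exists (t.2 c').
Qed.

Lemma block_in_family t c : block t c \in family (pivot t) c.
Proof.
rewrite /family; case: (ltngtP c (pivot t)) => [lt_c|gt_c|/val_inj->].
- by have [x ->] := block_before lt_c; apply: imset_f.
- by have [x ->] := block_after gt_c; apply: imset_f.
- by rewrite block_pivot; apply: imset_f.
Qed.

Lemma block_zero_in t t' :
  pivot t != pivot t' -> zero_in (block t (pivot t)) (block t' (pivot t)).
Proof.
move=> ne_p; rewrite block_pivot.
case: (ltngtP (pivot t) (pivot t')) => [lt_p|gt_p|/val_inj eq_p].
- by have [x ->] := block_before lt_p; case: (B_zero_in t.1.2 x).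
- by have [x ->] := block_after gt_p; case: (B_zero_in t.1.2 x).
- by rewrite eq_p eqxx in ne_p.
Qed.

Lemma block_pair_good t1 t2 t3 : pivot t1 = pivot t2 -> pivot t3 != pivot t1 ->
  good_at (block t1 (pivot t1)) (block t2 (pivot t1)) (block t3 (pivot t1)).
Proof.
move=> eq_p ne_p; rewrite {2}eq_p !block_pivot.
case: (ltngtP (pivot t3) (pivot t1)) => [lt_p|gt_p|/val_inj eq3].
- by have [x ->] := block_after lt_p; case: (B_pair_good t1.1.2 t2.1.2 x).
- by have [x ->] := block_before gt_p; case: (B_pair_good t1.1.2 t2.1.2 x).
- by rewrite eq3 eqxx in ne_p.
Qed.

Lemma block_mid_good t1 t2 t3 : pivot t1 < pivot t2 < pivot t3 ->
  good_at (block t1 (pivot t2)) (block t2 (pivot t2)) (block t3 (pivot t2)).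
Proof.
case/andP=> lt12 lt23; rewrite block_pivot.
by have [x ->] := block_after lt12; have [y ->] := block_before lt23.
Qed.

Lemma block_same_zero_in t1 t2 c : pivot t1 = pivot t2 ->
  block t1 c <> block t2 c -> zero_in (block t1 c) (block t2 c).
Proof.
move=> eq_p; apply: (admissible_zero_in (family_admissible (pivot t1) c)).
  exact: block_in_family.
by rewrite eq_p; apply: block_in_family.
Qed.

Lemma block_same_good t1 t2 t3 c : pivot t1 = pivot t2 -> pivot t2 = pivot t3 ->
  block t1 c <> block t2 c -> good_at (block t1 c) (block t2 c) (block t3 c).
Proof.
move=> eq12 eq23 ne12; apply: (admissible_good_at (family_admissible (pivot t1) c)).
- exact: block_in_family.
- by rewrite eq12; apply: block_in_family.
- by rewrite eq12 eq23; apply: block_in_family.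
- by case.
Qed.

Lemma glue_zero_in t1 t2 : glue t1 <> glue t2 -> zero_in (glue t1) (glue t2).
Proof.
move=> ne12; have [eq_p|ne_p] := eqVneq (pivot t1) (pivot t2).
  have [c ne_c] := concat_neq ne12.
  by apply: (zero_in_concat (c := c)); apply: block_same_zero_in.
by apply: (zero_in_concat (c := pivot t1)); apply: block_zero_in.
Qed.

Lemma glue_good_at t1 t2 t3 : glue t1 <> glue t2 -> glue t1 <> glue t3 ->
  glue t2 <> glue t3 -> good_at (glue t1) (glue t2) (glue t3).
Proof.
move: t1 t2 t3; apply: (good_at_wlog_sorted (key := fun t : layout => val (pivot t))).
move=> t1 t2 t3 /andP[le12 le23] ne12 ne13 ne23.
case: (ltngtP (pivot t1) (pivot t2)) le12 => // [lt12|/val_inj eq12] _.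
all: case: (ltngtP (pivot t2) (pivot t3)) le23 => // [lt23|/val_inj eq23] _.
- by apply: (good_at_concat (c := pivot t2)); apply: block_mid_good; rewrite lt12.
- apply/good_at_swap12/good_at_swap23.
  apply: (good_at_concat (c := pivot t2)); apply: block_pair_good => //.
  by rewrite neq_ltn lt12.
- apply: (good_at_concat (c := pivot t1)); apply: block_pair_good => //.
  by rewrite eq12 eq_sym neq_ltn lt23.
- have [c ne_c] := concat_neq ne12.
  by apply: (good_at_concat (c := c)); apply: block_same_good.
Qed.

Lemma block_product_admissible : admissible block_product.
Proof.
split=> [_ _ /imsetP[t1 _ ->] /imsetP[t2 _ ->] ne12|].
  by apply/cond1_zero_in; split; apply: glue_zero_in => // /esym.
by move=> _ _ _ /imsetP[t1 _ ->] /imsetP[t2 _ ->] /imsetP[t3 _ ->]; apply: glue_good_at.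
Qed.

Lemma glue_inj : injective glue.
Proof.
move=> t1 t2 eq12.
have {eq12} eq_block c : block t1 c = block t2 c by apply: concat_eq_block eq12.
have eq_p : pivot t1 = pivot t2.
  have [//|ne_p] := eqVneq (pivot t1) (pivot t2).
  by have := zero_in_neq (block_zero_in ne_p) (eq_block _).
have eq_j : t1.1.2 = t2.1.2.
  by apply: B_inj; rewrite -(block_pivot t1) -(block_pivot t2) -eq_p.
have eq_f : t1.2 = t2.2.
  apply/ffunP => c; have := eq_block (lift (pivot t1) c).
  by rewrite /block -eq_p liftK; case: ifP => _ => [/A_inj|/A'_inj].
case: t1 t2 eq_p eq_j eq_f {eq_block} => [[p1 j1] f1] [[p2 j2] f2].
by rewrite /pivot /= => -> -> ->.
Qed.

Lemma card_block_product : #|block_product| = n.+1 * b * a ^ n.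
Proof. by rewrite card_imset ?card_prod ?card_ffun ?card_ord //; apply: glue_inj. Qed.

Lemma weight_glue wa wb t :
  (forall x, weight (A x) = wa) -> (forall x, weight (A' x) = wa) ->
  (forall j, weight (B j) = wb) -> weight (glue t) = n * wa + wb.
Proof.
move=> wA wA' wB; rewrite weight_concat (bigD1 (pivot t)) //= block_pivot wB addnC.
rewrite (eq_bigr (fun _ => wa)) ?sum_nat_const ?cardC1 ?card_ord // => c ne_c.
case: (ltngtP c (pivot t)) ne_c => [lt_c|gt_c|/val_inj->]; last by rewrite eqxx.
- by have [x ->] := block_before lt_c.
- by have [x ->] := block_after gt_c.
Qed.

End BlockProduct.

Fixpoint triplewise (T : Type) (r : T -> T -> T -> bool) (s : seq T) : bool :=
  if s is x :: s' then pairwise (r x) s' && triplewise r s' else true.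

Lemma triplewiseP (T : Type) (x0 : T) (r : T -> T -> T -> bool) s i j k :
  triplewise r s -> i < j < k -> k < size s -> r (nth x0 s i) (nth x0 s j) (nth x0 s k).
Proof.
elim: s i j k => [|x s IHs] i j k //= /andP[/(pairwiseP x0) rx rs].
case: i j k => [|i] [|j] [|k] //=; rewrite ?ltnS ?andbF //.
  by move=> jk lt_k; apply: rx; rewrite ?inE // (leq_trans jk (ltnW lt_k)).
by move=> ijk lt_k; apply: IHs.
Qed.

Fixpoint zero_in_rows (u v : seq 'I_3) : bool :=
  if (u, v) is (x :: u', y :: v') then ((x == z0) && (y != z0)) || zero_in_rows u' v'
  else false.

Fixpoint good_at_rows (u v w : seq 'I_3) : bool :=
  if (u, v, w) is (x :: u', y :: v', z :: w') then
    good_tripleb x y z || good_at_rows u' v' w'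
  else false.

Lemma zero_in_rows_nth u v : zero_in_rows u v ->
  exists2 k, k < size u & (nth z0 u k == z0) && (nth z0 v k != z0).
Proof.
elim: u v => [|x u IHu] [|y v] //= /orP[zxy|/IHu[k lt_k zk]]; first by exists 0.
by exists k.+1.
Qed.

Lemma good_at_rows_nth u v w : good_at_rows u v w ->
  exists2 k, k < size u & good_tripleb (nth z0 u k) (nth z0 v k) (nth z0 w k).
Proof.
elim: u v w => [|x u IHu] [|y v] [|z w] //= /orP[gxyz|/IHu[k lt_k gk]]; first by exists 0.
by exists k.+1.
Qed.

Lemma allrel_nth (S T : Type) (r : S -> T -> bool) xs ys x0 y0 i j :
  allrel r xs ys -> i < size xs -> j < size ys -> r (nth x0 xs i) (nth y0 ys j).
Proof. by move=> /(all_nthP x0)/(_ i) r_i lt_i; apply/(all_nthP y0)/r_i. Qed.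

Section Rows.
Variable d : nat.
Implicit Types r u v w : seq 'I_3.

Definition vec_of_row r : vec d := [ffun k : 'I_d => nth z0 r k].

Lemma zero_in_rowsP u v :
  size u = d -> zero_in_rows u v -> zero_in (vec_of_row u) (vec_of_row v).
Proof.
move=> size_u /zero_in_rows_nth[k]; rewrite size_u => lt_k /andP[/eqP zu /eqP nzv].
by exists (Ordinal lt_k); rewrite !ffunE.
Qed.

Lemma good_at_rowsP u v w : size u = d -> good_at_rows u v w ->
  good_at (vec_of_row u) (vec_of_row v) (vec_of_row w).
Proof.
move=> size_u /good_at_rows_nth[k]; rewrite size_u => lt_k /good_tripleP g.
by exists (Ordinal lt_k); rewrite !ffunE.
Qed.

Lemma vec_of_row_opp r : vec_of_row (map (fun x => - x)%R r) = (- vec_of_row r)%R.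
Proof.
apply/ffunP => k; rewrite !ffunE; have [lt_k|ge_k] := ltnP k (size r).
  by rewrite (nth_map z0).
by rewrite !nth_default ?size_map // z0E oppr0.
Qed.

Lemma weight_vec_of_row r :
  size r = d -> weight (vec_of_row r) = count (fun x => x != z0) r.
Proof.
move=> size_r; rewrite weightE -sum1_count (big_nth z0) size_r big_mkord.
rewrite [RHS]big_mkcond.
by apply: eq_bigr => k _; rewrite ffunE; case: ifP.
Qed.

Section RowFamily.
Variable L : seq (seq 'I_3).

Definition rows_admissible : bool :=
  [&& all (fun r => size r == d) L,
      pairwise (fun u v => zero_in_rows u v && zero_in_rows v u) L &
      triplewise good_at_rows L].

Definition row_vec (x : 'I_(size L)) : vec d := vec_of_row (nth [::] L x).

Hypothesis L_adm : rows_admissible.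

Lemma row_size (x : 'I_(size L)) : size (nth [::] L x) = d.
Proof. by case/and3P: L_adm => /(all_nthP [::])/(_ x (ltn_ord x))/eqP. Qed.

Lemma row_vec_zero_in x y : x != y -> zero_in (row_vec x) (row_vec y).
Proof.
case/and3P: L_adm => _ /(pairwiseP [::]) zero_in_L _.
rewrite neq_ltn => /orP[lt_xy|lt_yx].
  case/andP: (zero_in_L x y (ltn_ord x) (ltn_ord y) lt_xy) => zxy _.
  exact: zero_in_rowsP (row_size x) zxy.
case/andP: (zero_in_L y x (ltn_ord y) (ltn_ord x) lt_yx) => _ zxy.
exact: zero_in_rowsP (row_size x) zxy.
Qed.

Lemma row_vec_inj : injective row_vec.
Proof.
move=> x y eq_xy; have [//|ne_xy] := eqVneq x y.
by have := zero_in_neq (row_vec_zero_in ne_xy) eq_xy.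
Qed.

Lemma row_vec_admissible : admissible [set row_vec x | x : 'I_(size L)].
Proof.
split=> [_ _ /imsetP[x _ ->] /imsetP[y _ ->] ne_xy|].
  have ne_yx : y != x by apply/eqP=> eq_yx; apply: ne_xy; rewrite eq_yx.
  by apply/cond1_zero_in; split; apply: row_vec_zero_in; rewrite // eq_sym.
move=> _ _ _ /imsetP[x _ ->] /imsetP[y _ ->] /imsetP[z _ ->].
have lt_of_neq (i j : 'I_(size L)) : i <= j -> row_vec i <> row_vec j -> i < j.
  by rewrite leq_eqVlt => /orP[/eqP/val_inj-> /(_ erefl)|].
move: x y z; apply: (good_at_wlog_sorted (key := val)) => x y z.
move=> /andP[le_xy le_yz] ne_xy _ ne_yz; case/and3P: L_adm => _ _ good_L.
apply: good_at_rowsP (row_size x) _; apply: triplewiseP good_L _ _ => //.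
by rewrite !lt_of_neq.
Qed.

End RowFamily.
End Rows.

(* A is an admissible set of weight-7 vectors found by computer search. *)
Definition A_codes : seq (seq nat) :=
 [:: [:: 2; 1; 2; 1; 1; 1; 2; 0; 0; 0; 0];
  [:: 1; 1; 1; 2; 1; 1; 0; 1; 0; 0; 0];
  [:: 2; 1; 2; 2; 1; 0; 1; 1; 0; 0; 0];
  [:: 1; 2; 1; 1; 0; 1; 2; 2; 0; 0; 0];
  [:: 1; 1; 1; 0; 1; 1; 2; 1; 0; 0; 0];
  [:: 1; 1; 0; 1; 2; 2; 2; 1; 0; 0; 0];
  [:: 1; 0; 1; 2; 2; 2; 1; 1; 0; 0; 0];
  [:: 0; 2; 1; 2; 1; 1; 1; 2; 0; 0; 0];
  [:: 1; 2; 1; 1; 2; 1; 0; 0; 2; 0; 0];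
  [:: 1; 1; 2; 1; 2; 0; 2; 0; 1; 0; 0];
  [:: 2; 1; 1; 1; 0; 1; 1; 0; 1; 0; 0];
  [:: 2; 2; 1; 0; 1; 1; 1; 0; 2; 0; 0];
  [:: 2; 1; 0; 2; 1; 2; 1; 0; 1; 0; 0];
  [:: 1; 0; 1; 2; 2; 2; 1; 0; 1; 0; 0];
  [:: 0; 1; 1; 1; 2; 1; 1; 0; 1; 0; 0];
  [:: 1; 1; 2; 1; 1; 0; 0; 2; 2; 0; 0];
  [:: 1; 1; 2; 2; 0; 1; 0; 2; 1; 0; 0];
  [:: 1; 1; 1; 0; 1; 1; 0; 1; 2; 0; 0];
  [:: 2; 1; 0; 2; 1; 2; 0; 1; 1; 0; 0];
  [:: 2; 0; 1; 1; 1; 2; 0; 1; 2; 0; 0];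
  [:: 0; 2; 1; 2; 2; 1; 0; 1; 1; 0; 0];
  [:: 2; 1; 2; 2; 0; 0; 1; 1; 1; 0; 0];
  [:: 1; 1; 2; 0; 2; 0; 2; 1; 1; 0; 0];
  [:: 2; 1; 0; 1; 2; 0; 1; 2; 1; 0; 0];
  [:: 2; 0; 1; 1; 2; 0; 1; 2; 1; 0; 0];
  [:: 0; 1; 2; 1; 1; 0; 1; 2; 2; 0; 0];
  [:: 1; 1; 1; 0; 0; 2; 1; 2; 2; 0; 0];
  [:: 2; 2; 0; 1; 0; 1; 2; 1; 1; 0; 0];
  [:: 2; 0; 1; 1; 0; 2; 1; 1; 2; 0; 0];
  [:: 0; 1; 1; 1; 0; 1; 1; 2; 1; 0; 0];
  [:: 2; 2; 0; 0; 1; 1; 2; 1; 1; 0; 0];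
  [:: 1; 0; 2; 0; 2; 1; 1; 1; 2; 0; 0];
  [:: 0; 1; 1; 0; 1; 2; 2; 2; 1; 0; 0];
  [:: 2; 0; 0; 1; 2; 1; 1; 2; 1; 0; 0];
  [:: 0; 1; 0; 1; 2; 2; 2; 1; 1; 0; 0];
  [:: 0; 0; 2; 1; 2; 1; 1; 1; 2; 0; 0];
  [:: 1; 2; 2; 2; 1; 1; 0; 0; 0; 1; 0];
  [:: 1; 2; 2; 2; 1; 0; 1; 0; 0; 1; 0];
  [:: 1; 1; 1; 2; 0; 1; 2; 0; 0; 2; 0];
  [:: 1; 1; 2; 0; 1; 2; 1; 0; 0; 2; 0];
  [:: 1; 1; 0; 2; 1; 1; 2; 0; 0; 2; 0];
  [:: 2; 0; 2; 1; 1; 1; 2; 0; 0; 1; 0];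
  [:: 0; 1; 2; 1; 1; 2; 1; 0; 0; 2; 0];
  [:: 2; 1; 1; 1; 2; 0; 0; 1; 0; 2; 0];
  [:: 1; 2; 2; 1; 0; 1; 0; 1; 0; 2; 0];
  [:: 1; 1; 1; 0; 1; 1; 0; 1; 0; 2; 0];
  [:: 1; 1; 0; 1; 1; 2; 0; 2; 0; 2; 0];
  [:: 2; 0; 1; 2; 2; 1; 0; 1; 0; 1; 0];
  [:: 0; 1; 1; 2; 1; 2; 0; 2; 0; 1; 0];
  [:: 1; 2; 1; 1; 0; 0; 2; 2; 0; 1; 0];
  [:: 1; 2; 1; 0; 2; 0; 1; 1; 0; 2; 0];
  [:: 2; 1; 0; 1; 1; 0; 2; 2; 0; 1; 0];
  [:: 2; 0; 1; 1; 1; 0; 1; 1; 0; 1; 0];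
  [:: 0; 2; 1; 1; 1; 0; 1; 1; 0; 1; 0];
  [:: 2; 1; 1; 0; 0; 1; 1; 2; 0; 2; 0];
  [:: 1; 1; 0; 2; 0; 1; 2; 1; 0; 2; 0];
  [:: 2; 0; 1; 1; 0; 1; 1; 2; 0; 2; 0];
  [:: 0; 2; 2; 1; 0; 1; 1; 1; 0; 2; 0];
  [:: 2; 1; 0; 0; 1; 1; 2; 2; 0; 1; 0];
  [:: 1; 0; 2; 0; 1; 2; 2; 1; 0; 1; 0];
  [:: 0; 2; 1; 0; 2; 1; 2; 1; 0; 1; 0];
  [:: 1; 0; 0; 1; 1; 2; 1; 2; 0; 2; 0];
  [:: 0; 1; 0; 1; 2; 2; 2; 1; 0; 1; 0];
  [:: 0; 0; 1; 1; 1; 2; 1; 1; 0; 1; 0];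
  [:: 1; 2; 2; 2; 1; 0; 0; 0; 1; 1; 0];
  [:: 2; 1; 2; 1; 0; 1; 0; 0; 2; 1; 0];
  [:: 2; 1; 2; 0; 1; 1; 0; 0; 2; 1; 0];
  [:: 1; 2; 0; 1; 2; 1; 0; 0; 2; 1; 0];
  [:: 1; 0; 1; 2; 1; 1; 0; 0; 2; 2; 0];
  [:: 0; 1; 1; 2; 1; 1; 0; 0; 2; 2; 0];
  [:: 2; 1; 1; 2; 0; 0; 2; 0; 1; 1; 0];
  [:: 1; 1; 2; 0; 2; 0; 2; 0; 1; 1; 0];
  [:: 1; 1; 0; 2; 2; 0; 1; 0; 2; 1; 0];
  [:: 2; 0; 1; 2; 1; 0; 2; 0; 1; 1; 0];
  [:: 0; 1; 1; 2; 2; 0; 1; 0; 2; 1; 0];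
  [:: 1; 2; 1; 0; 0; 2; 1; 0; 1; 2; 0];
  [:: 2; 2; 0; 1; 0; 2; 1; 0; 1; 1; 0];
  [:: 1; 0; 2; 1; 0; 1; 1; 0; 2; 2; 0];
  [:: 0; 1; 1; 1; 0; 1; 1; 0; 1; 2; 0];
  [:: 1; 2; 0; 0; 1; 1; 1; 0; 1; 1; 0];
  [:: 1; 0; 2; 0; 1; 1; 1; 0; 1; 1; 0];
  [:: 0; 2; 1; 0; 2; 1; 2; 0; 1; 1; 0];
  [:: 1; 0; 0; 2; 1; 1; 1; 0; 1; 1; 0];
  [:: 0; 2; 0; 1; 1; 1; 2; 0; 1; 2; 0];
  [:: 0; 0; 2; 1; 2; 2; 1; 0; 1; 1; 0];
  [:: 1; 1; 2; 1; 0; 0; 0; 1; 1; 1; 0];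
  [:: 1; 1; 1; 0; 2; 0; 0; 2; 2; 1; 0];
  [:: 1; 1; 0; 1; 2; 0; 0; 1; 1; 1; 0];
  [:: 2; 0; 2; 1; 1; 0; 0; 1; 1; 2; 0];
  [:: 0; 2; 1; 2; 2; 0; 0; 1; 1; 1; 0];
  [:: 1; 2; 1; 0; 0; 2; 0; 1; 1; 2; 0];
  [:: 1; 1; 0; 1; 0; 2; 0; 1; 1; 1; 0];
  [:: 2; 0; 1; 1; 0; 2; 0; 1; 2; 1; 0];
  [:: 0; 1; 1; 2; 0; 2; 0; 2; 1; 1; 0];
  [:: 1; 1; 0; 0; 2; 1; 0; 2; 1; 2; 0];
  [:: 2; 0; 2; 0; 1; 1; 0; 1; 1; 2; 0];
  [:: 0; 2; 1; 0; 1; 2; 0; 1; 2; 1; 0];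
  [:: 2; 0; 0; 2; 2; 1; 0; 1; 1; 1; 0];
  [:: 0; 2; 0; 1; 1; 2; 0; 1; 2; 1; 0];
  [:: 0; 0; 1; 2; 1; 1; 0; 1; 2; 2; 0];
  [:: 1; 2; 2; 0; 0; 0; 1; 2; 1; 1; 0];
  [:: 1; 1; 0; 1; 0; 0; 2; 1; 1; 1; 0];
  [:: 1; 0; 2; 1; 0; 0; 1; 1; 2; 2; 0];
  [:: 0; 1; 1; 1; 0; 0; 2; 1; 2; 2; 0];
  [:: 1; 2; 0; 0; 2; 0; 1; 1; 1; 2; 0];
  [:: 1; 0; 1; 0; 2; 0; 1; 2; 2; 1; 0];
  [:: 0; 2; 2; 0; 1; 0; 1; 2; 1; 1; 0];
  [:: 1; 0; 0; 2; 1; 0; 2; 1; 2; 1; 0];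
  [:: 0; 2; 0; 1; 1; 0; 2; 1; 1; 2; 0];
  [:: 0; 0; 1; 1; 1; 0; 1; 1; 2; 1; 0];
  [:: 1; 1; 0; 0; 0; 2; 1; 2; 2; 1; 0];
  [:: 2; 0; 1; 0; 0; 1; 1; 2; 1; 2; 0];
  [:: 0; 2; 2; 0; 0; 1; 1; 2; 1; 1; 0];
  [:: 1; 0; 0; 1; 0; 1; 2; 2; 2; 1; 0];
  [:: 0; 1; 0; 2; 0; 2; 1; 1; 1; 2; 0];
  [:: 0; 0; 1; 1; 0; 1; 2; 2; 2; 1; 0];
  [:: 1; 0; 0; 0; 1; 1; 1; 2; 1; 1; 0];
  [:: 0; 2; 0; 0; 1; 2; 1; 1; 2; 1; 0];
  [:: 0; 0; 1; 0; 1; 2; 2; 2; 1; 1; 0];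
  [:: 0; 0; 0; 2; 1; 2; 1; 1; 1; 2; 0];
  [:: 1; 2; 1; 1; 1; 2; 0; 0; 0; 0; 2];
  [:: 1; 1; 2; 1; 1; 0; 1; 0; 0; 0; 1];
  [:: 1; 2; 2; 1; 0; 1; 1; 0; 0; 0; 2];
  [:: 2; 1; 1; 0; 1; 2; 2; 0; 0; 0; 1];
  [:: 1; 1; 0; 1; 1; 2; 1; 0; 0; 0; 1];
  [:: 1; 0; 1; 2; 2; 2; 1; 0; 0; 0; 1];
  [:: 0; 1; 2; 2; 2; 1; 1; 0; 0; 0; 1];
  [:: 2; 1; 1; 2; 1; 0; 0; 2; 0; 0; 1];
  [:: 1; 2; 1; 2; 0; 2; 0; 1; 0; 0; 1];
  [:: 1; 1; 1; 0; 1; 1; 0; 1; 0; 0; 2];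
  [:: 2; 1; 0; 1; 1; 1; 0; 2; 0; 0; 2];
  [:: 1; 0; 2; 1; 2; 1; 0; 1; 0; 0; 2];
  [:: 0; 1; 2; 2; 2; 1; 0; 1; 0; 0; 1];
  [:: 1; 2; 1; 1; 0; 0; 2; 2; 0; 0; 1];
  [:: 1; 2; 2; 0; 1; 0; 2; 1; 0; 0; 1];
  [:: 1; 1; 0; 1; 1; 0; 1; 2; 0; 0; 1];
  [:: 1; 0; 2; 1; 2; 0; 1; 1; 0; 0; 2];
  [:: 0; 1; 1; 1; 2; 0; 1; 2; 0; 0; 2];
  [:: 1; 2; 2; 0; 0; 1; 1; 1; 0; 0; 2];
  [:: 1; 2; 0; 2; 0; 2; 1; 1; 0; 0; 1];
  [:: 1; 0; 1; 2; 0; 1; 2; 1; 0; 0; 2];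
  [:: 0; 1; 1; 2; 0; 1; 2; 1; 0; 0; 2];
  [:: 1; 1; 0; 0; 2; 1; 2; 2; 0; 0; 1];
  [:: 2; 0; 1; 0; 1; 2; 1; 1; 0; 0; 2];
  [:: 0; 1; 1; 0; 2; 1; 1; 2; 0; 0; 2];
  [:: 2; 0; 0; 1; 1; 2; 1; 1; 0; 0; 2];
  [:: 0; 2; 0; 2; 1; 1; 1; 2; 0; 0; 1];
  [:: 0; 0; 1; 2; 1; 1; 2; 1; 0; 0; 2];
  [:: 2; 2; 2; 1; 1; 0; 0; 0; 1; 0; 1];
  [:: 2; 2; 2; 1; 0; 1; 0; 0; 1; 0; 1];
  [:: 1; 1; 2; 0; 1; 2; 0; 0; 2; 0; 1];
  [:: 1; 2; 0; 1; 2; 1; 0; 0; 2; 0; 1];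
  [:: 1; 0; 2; 1; 1; 2; 0; 0; 2; 0; 1];
  [:: 0; 2; 1; 1; 1; 2; 0; 0; 1; 0; 2];
  [:: 1; 1; 1; 2; 0; 0; 1; 0; 2; 0; 2];
  [:: 2; 2; 1; 0; 1; 0; 1; 0; 2; 0; 1];
  [:: 1; 1; 0; 1; 1; 0; 1; 0; 2; 0; 1];
  [:: 1; 0; 1; 1; 2; 0; 2; 0; 2; 0; 1];
  [:: 0; 1; 2; 2; 1; 0; 1; 0; 1; 0; 2];
  [:: 2; 1; 1; 0; 0; 2; 2; 0; 1; 0; 1];
  [:: 2; 1; 0; 2; 0; 1; 1; 0; 2; 0; 1];
  [:: 1; 0; 1; 1; 0; 2; 2; 0; 1; 0; 2];
  [:: 0; 1; 1; 1; 0; 1; 1; 0; 1; 0; 2];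
  [:: 1; 1; 0; 0; 1; 1; 2; 0; 2; 0; 2];
  [:: 1; 0; 2; 0; 1; 2; 1; 0; 2; 0; 1];
  [:: 0; 1; 1; 0; 1; 1; 2; 0; 2; 0; 2];
  [:: 1; 0; 0; 1; 1; 2; 2; 0; 1; 0; 2];
  [:: 0; 2; 0; 1; 2; 2; 1; 0; 1; 0; 1];
  [:: 0; 0; 1; 1; 2; 1; 2; 0; 2; 0; 1];
  [:: 2; 2; 2; 1; 0; 0; 0; 1; 1; 0; 1];
  [:: 1; 2; 1; 0; 1; 0; 0; 2; 1; 0; 2];
  [:: 1; 2; 0; 1; 1; 0; 0; 2; 1; 0; 2];
  [:: 2; 0; 1; 2; 1; 0; 0; 2; 1; 0; 1];
  [:: 0; 1; 2; 1; 1; 0; 0; 2; 2; 0; 1];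
  [:: 1; 1; 2; 0; 0; 2; 0; 1; 1; 0; 2];
  [:: 1; 2; 0; 2; 0; 2; 0; 1; 1; 0; 1];
  [:: 1; 0; 2; 2; 0; 1; 0; 2; 1; 0; 1];
  [:: 0; 1; 2; 1; 0; 2; 0; 1; 1; 0; 2];
  [:: 2; 1; 0; 0; 2; 1; 0; 1; 2; 0; 1];
  [:: 2; 0; 1; 0; 2; 1; 0; 1; 1; 0; 2];
  [:: 0; 2; 1; 0; 1; 1; 0; 2; 2; 0; 1];
  [:: 2; 0; 0; 1; 1; 1; 0; 1; 1; 0; 1];
  [:: 0; 2; 0; 1; 1; 1; 0; 1; 1; 0; 1];
  [:: 0; 0; 2; 1; 1; 1; 0; 1; 1; 0; 1];
  [:: 1; 2; 1; 0; 0; 0; 1; 1; 1; 0; 1];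
  [:: 1; 1; 0; 2; 0; 0; 2; 2; 1; 0; 1];
  [:: 1; 0; 1; 2; 0; 0; 1; 1; 1; 0; 1];
  [:: 0; 2; 1; 1; 0; 0; 1; 1; 2; 0; 2];
  [:: 2; 1; 0; 0; 2; 0; 1; 1; 2; 0; 1];
  [:: 1; 0; 1; 0; 2; 0; 1; 1; 1; 0; 1];
  [:: 0; 1; 1; 0; 2; 0; 1; 2; 1; 0; 2];
  [:: 1; 0; 0; 2; 1; 0; 2; 1; 2; 0; 1];
  [:: 0; 2; 0; 1; 1; 0; 1; 1; 2; 0; 2];
  [:: 0; 0; 2; 2; 1; 0; 1; 1; 1; 0; 2];
  [:: 2; 2; 0; 0; 0; 1; 2; 1; 1; 0; 1];
  [:: 1; 0; 1; 0; 0; 2; 1; 1; 1; 0; 1];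
  [:: 0; 2; 1; 0; 0; 1; 1; 2; 2; 0; 1];
  [:: 2; 0; 0; 2; 0; 1; 1; 1; 2; 0; 1];
  [:: 0; 1; 0; 2; 0; 1; 2; 2; 1; 0; 1];
  [:: 0; 0; 2; 1; 0; 2; 1; 2; 1; 0; 1];
  [:: 1; 0; 0; 0; 2; 1; 2; 2; 1; 0; 1];
  [:: 0; 1; 0; 0; 1; 1; 2; 1; 2; 0; 2];
  [:: 0; 0; 1; 0; 1; 2; 2; 2; 1; 0; 1];
  [:: 0; 0; 0; 1; 1; 1; 2; 1; 1; 0; 1];
  [:: 2; 1; 1; 1; 2; 0; 0; 0; 0; 2; 1];
  [:: 1; 2; 1; 1; 0; 1; 0; 0; 0; 1; 1];
  [:: 2; 2; 1; 0; 1; 1; 0; 0; 0; 2; 1];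
  [:: 1; 1; 0; 1; 2; 2; 0; 0; 0; 1; 2];
  [:: 1; 0; 1; 1; 2; 1; 0; 0; 0; 1; 1];
  [:: 0; 1; 2; 2; 2; 1; 0; 0; 0; 1; 1];
  [:: 1; 1; 2; 1; 0; 0; 2; 0; 0; 1; 2];
  [:: 2; 1; 2; 0; 2; 0; 1; 0; 0; 1; 1];
  [:: 1; 1; 0; 1; 1; 0; 1; 0; 0; 2; 1];
  [:: 1; 0; 1; 1; 1; 0; 2; 0; 0; 2; 2];
  [:: 0; 2; 1; 2; 1; 0; 1; 0; 0; 2; 1];
  [:: 2; 1; 1; 0; 0; 2; 2; 0; 0; 1; 1];
  [:: 2; 2; 0; 1; 0; 2; 1; 0; 0; 1; 1];
  [:: 1; 0; 1; 1; 0; 1; 2; 0; 0; 1; 1];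
  [:: 0; 2; 1; 2; 0; 1; 1; 0; 0; 2; 1];
  [:: 2; 2; 0; 0; 1; 1; 1; 0; 0; 2; 1];
  [:: 2; 0; 2; 0; 2; 1; 1; 0; 0; 1; 1];
  [:: 0; 1; 2; 0; 1; 2; 1; 0; 0; 2; 1];
  [:: 1; 0; 0; 2; 1; 2; 2; 0; 0; 1; 1];
  [:: 0; 1; 0; 1; 2; 1; 1; 0; 0; 2; 2];
  [:: 0; 0; 1; 1; 2; 1; 1; 0; 0; 2; 2];
  [:: 2; 2; 1; 1; 0; 0; 0; 1; 0; 1; 2];
  [:: 2; 2; 1; 0; 1; 0; 0; 1; 0; 1; 2];
  [:: 1; 2; 0; 1; 2; 0; 0; 2; 0; 1; 1];
  [:: 2; 0; 1; 2; 1; 0; 0; 2; 0; 1; 1];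
  [:: 0; 2; 1; 1; 2; 0; 0; 2; 0; 1; 1];
  [:: 1; 1; 2; 0; 0; 1; 0; 2; 0; 2; 1];
  [:: 2; 1; 0; 1; 0; 1; 0; 2; 0; 1; 2];
  [:: 1; 0; 1; 1; 0; 1; 0; 2; 0; 1; 1];
  [:: 0; 1; 1; 2; 0; 2; 0; 2; 0; 1; 1];
  [:: 1; 1; 0; 0; 2; 2; 0; 1; 0; 1; 2];
  [:: 1; 0; 2; 0; 1; 1; 0; 2; 0; 1; 2];
  [:: 0; 1; 1; 0; 2; 2; 0; 1; 0; 2; 1];
  [:: 1; 0; 0; 1; 1; 2; 0; 2; 0; 2; 1];
  [:: 0; 2; 0; 1; 2; 1; 0; 2; 0; 1; 1];
  [:: 0; 0; 1; 1; 2; 2; 0; 1; 0; 2; 1];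
  [:: 2; 2; 1; 0; 0; 0; 1; 1; 0; 1; 2];
  [:: 2; 1; 0; 1; 0; 0; 2; 1; 0; 2; 1];
  [:: 2; 0; 1; 1; 0; 0; 2; 1; 0; 2; 1];
  [:: 0; 1; 2; 1; 0; 0; 2; 1; 0; 1; 2];
  [:: 1; 2; 0; 0; 2; 0; 1; 1; 0; 2; 1];
  [:: 2; 0; 2; 0; 2; 0; 1; 1; 0; 1; 1];
  [:: 0; 2; 2; 0; 1; 0; 2; 1; 0; 1; 1];
  [:: 1; 0; 0; 2; 1; 0; 1; 2; 0; 1; 2];
  [:: 0; 1; 0; 2; 1; 0; 1; 1; 0; 2; 2];
  [:: 0; 0; 1; 1; 1; 0; 1; 1; 0; 1; 2];
  [:: 2; 1; 0; 0; 0; 1; 1; 1; 0; 1; 1];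
  [:: 1; 0; 2; 0; 0; 2; 2; 1; 0; 1; 1];
  [:: 0; 1; 2; 0; 0; 1; 1; 1; 0; 1; 1];
  [:: 1; 0; 0; 2; 0; 1; 1; 2; 0; 1; 2];
  [:: 0; 1; 0; 2; 0; 1; 1; 1; 0; 1; 1];
  [:: 0; 0; 2; 1; 0; 2; 1; 2; 0; 1; 1];
  [:: 2; 0; 0; 0; 1; 2; 1; 1; 0; 1; 2];
  [:: 0; 1; 0; 0; 2; 1; 1; 1; 0; 1; 1];
  [:: 0; 0; 2; 0; 1; 1; 1; 2; 0; 1; 2];
  [:: 0; 0; 0; 2; 1; 2; 2; 1; 0; 1; 1];
  [:: 1; 1; 1; 2; 0; 0; 0; 0; 2; 1; 2];
  [:: 2; 1; 1; 0; 1; 0; 0; 0; 1; 1; 1];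
  [:: 2; 1; 0; 1; 1; 0; 0; 0; 2; 1; 2];
  [:: 1; 0; 1; 2; 2; 0; 0; 0; 1; 2; 1];
  [:: 0; 1; 1; 2; 1; 0; 0; 0; 1; 1; 1];
  [:: 1; 2; 1; 0; 0; 2; 0; 0; 1; 2; 1];
  [:: 1; 2; 0; 2; 0; 1; 0; 0; 1; 1; 2];
  [:: 1; 0; 1; 1; 0; 1; 0; 0; 2; 1; 1];
  [:: 0; 1; 1; 1; 0; 2; 0; 0; 2; 2; 1];
  [:: 1; 1; 0; 0; 2; 2; 0; 0; 1; 1; 2];
  [:: 2; 0; 1; 0; 2; 1; 0; 0; 1; 1; 2];
  [:: 0; 1; 1; 0; 1; 2; 0; 0; 1; 1; 1];
  [:: 2; 0; 0; 1; 1; 1; 0; 0; 2; 1; 2];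
  [:: 0; 2; 0; 2; 1; 1; 0; 0; 1; 1; 2];
  [:: 0; 0; 2; 1; 2; 2; 0; 0; 1; 1; 1];
  [:: 2; 1; 1; 0; 0; 0; 1; 0; 1; 2; 2];
  [:: 2; 1; 0; 1; 0; 0; 1; 0; 1; 2; 2];
  [:: 2; 0; 1; 2; 0; 0; 2; 0; 1; 1; 1];
  [:: 0; 1; 2; 1; 0; 0; 2; 0; 1; 1; 2];
  [:: 1; 2; 0; 0; 1; 0; 2; 0; 2; 1; 1];
  [:: 1; 0; 1; 0; 1; 0; 2; 0; 1; 2; 2];
  [:: 0; 1; 1; 0; 1; 0; 2; 0; 1; 1; 1];
  [:: 1; 0; 0; 2; 2; 0; 1; 0; 1; 2; 1];
  [:: 0; 2; 0; 1; 1; 0; 2; 0; 1; 2; 1];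
  [:: 0; 0; 1; 1; 2; 0; 2; 0; 2; 1; 1];
  [:: 2; 1; 0; 0; 0; 1; 1; 0; 1; 2; 2];
  [:: 1; 0; 1; 0; 0; 2; 1; 0; 2; 1; 2];
  [:: 0; 1; 1; 0; 0; 2; 1; 0; 2; 1; 2];
  [:: 2; 0; 0; 2; 0; 1; 1; 0; 2; 1; 1];
  [:: 0; 2; 0; 2; 0; 1; 1; 0; 1; 1; 2];
  [:: 0; 0; 2; 1; 0; 1; 2; 0; 1; 2; 1];
  [:: 1; 0; 0; 0; 1; 1; 1; 0; 1; 1; 2];
  [:: 0; 2; 0; 0; 2; 2; 1; 0; 1; 1; 1];
  [:: 0; 0; 2; 0; 1; 1; 2; 0; 1; 2; 1];
  [:: 0; 0; 0; 1; 2; 1; 1; 0; 1; 2; 2];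
  [:: 1; 1; 2; 0; 0; 0; 0; 2; 1; 2; 1];
  [:: 1; 1; 0; 1; 0; 0; 0; 1; 1; 1; 2];
  [:: 1; 0; 1; 1; 0; 0; 0; 2; 1; 2; 2];
  [:: 0; 1; 2; 2; 0; 0; 0; 1; 2; 1; 1];
  [:: 2; 1; 0; 0; 2; 0; 0; 1; 2; 1; 1];
  [:: 2; 0; 2; 0; 1; 0; 0; 1; 1; 2; 1];
  [:: 0; 1; 1; 0; 1; 0; 0; 2; 1; 1; 1];
  [:: 1; 0; 0; 2; 2; 0; 0; 1; 1; 2; 1];
  [:: 0; 1; 0; 2; 1; 0; 0; 1; 1; 2; 2];
  [:: 0; 0; 1; 1; 1; 0; 0; 2; 1; 2; 2];
  [:: 1; 1; 0; 0; 0; 1; 0; 1; 2; 2; 2];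
  [:: 1; 0; 1; 0; 0; 1; 0; 1; 2; 2; 2];
  [:: 0; 1; 2; 0; 0; 2; 0; 1; 1; 1; 2];
  [:: 2; 0; 0; 1; 0; 2; 0; 2; 1; 1; 1];
  [:: 0; 1; 0; 1; 0; 2; 0; 1; 2; 2; 1];
  [:: 0; 0; 2; 2; 0; 1; 0; 1; 2; 1; 1];
  [:: 1; 0; 0; 0; 1; 1; 0; 1; 2; 2; 2];
  [:: 0; 1; 0; 0; 2; 1; 0; 2; 1; 2; 1];
  [:: 0; 0; 2; 0; 1; 1; 0; 2; 1; 1; 2];
  [:: 0; 0; 0; 1; 1; 1; 0; 1; 1; 2; 1];
  [:: 1; 2; 0; 0; 0; 0; 2; 1; 2; 1; 1];
  [:: 1; 0; 1; 0; 0; 0; 1; 1; 1; 2; 1];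
  [:: 0; 1; 1; 0; 0; 0; 2; 1; 2; 2; 1];
  [:: 1; 0; 0; 2; 0; 0; 1; 2; 1; 1; 2];
  [:: 0; 2; 0; 1; 0; 0; 1; 1; 2; 1; 2];
  [:: 0; 0; 2; 2; 0; 0; 1; 1; 2; 1; 1];
  [:: 1; 0; 0; 0; 1; 0; 1; 2; 2; 2; 1];
  [:: 0; 1; 0; 0; 1; 0; 1; 2; 2; 2; 1];
  [:: 0; 0; 1; 0; 2; 0; 2; 1; 1; 1; 2];
  [:: 0; 0; 0; 1; 1; 0; 1; 2; 2; 2; 1];
  [:: 2; 0; 0; 0; 0; 2; 1; 2; 1; 1; 1];
  [:: 0; 1; 0; 0; 0; 1; 1; 1; 2; 1; 1];
  [:: 0; 0; 2; 0; 0; 1; 2; 1; 1; 2; 1];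
  [:: 0; 0; 0; 1; 0; 1; 2; 2; 2; 1; 1];
  [:: 0; 0; 0; 0; 2; 1; 2; 1; 1; 1; 2]].

Definition B_codes : seq (seq nat) :=
 [:: [:: 0; 0; 0; 0; 0; 1; 1; 0; 1; 0; 0];
  [:: 0; 0; 0; 0; 1; 0; 1; 0; 1; 0; 0];
  [:: 0; 0; 0; 1; 0; 0; 1; 0; 0; 0; 1];
  [:: 0; 0; 0; 0; 1; 1; 0; 0; 0; 1; 0];
  [:: 0; 0; 1; 0; 0; 1; 0; 0; 0; 0; 1];
  [:: 1; 0; 1; 0; 0; 0; 0; 0; 0; 1; 0];
  [:: 0; 0; 0; 0; 0; 1; 1; 1; 0; 0; 0];
  [:: 0; 0; 2; 0; 0; 2; 0; 0; 2; 0; 0];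
  [:: 1; 0; 0; 0; 0; 1; 0; 1; 0; 0; 0];
  [:: 0; 0; 0; 0; 1; 0; 0; 1; 0; 1; 0];
  [:: 0; 0; 2; 2; 0; 0; 2; 0; 0; 0; 0];
  [:: 0; 1; 1; 0; 1; 0; 0; 0; 0; 0; 0];
  [:: 0; 0; 0; 0; 0; 0; 0; 2; 2; 0; 2];
  [:: 0; 0; 0; 0; 0; 0; 1; 0; 1; 0; 1];
  [:: 0; 0; 0; 0; 0; 0; 2; 0; 0; 2; 2];
  [:: 0; 0; 1; 1; 0; 1; 0; 0; 0; 0; 0];
  [:: 0; 0; 1; 0; 1; 0; 0; 0; 0; 1; 0];
  [:: 0; 0; 0; 0; 2; 0; 2; 0; 0; 2; 0];
  [:: 0; 1; 0; 0; 0; 0; 1; 0; 0; 1; 0];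
  [:: 0; 1; 0; 0; 0; 0; 1; 0; 1; 0; 0];
  [:: 0; 2; 2; 0; 0; 0; 0; 2; 0; 0; 0];
  [:: 0; 0; 0; 1; 0; 0; 0; 0; 1; 1; 0];
  [:: 0; 0; 2; 0; 2; 0; 2; 0; 0; 0; 0];
  [:: 0; 0; 2; 0; 2; 0; 0; 2; 0; 0; 0];
  [:: 0; 0; 0; 2; 0; 0; 0; 2; 0; 2; 0];
  [:: 2; 0; 0; 0; 0; 0; 2; 0; 0; 0; 2];
  [:: 0; 0; 0; 2; 0; 2; 0; 0; 0; 2; 0];
  [:: 2; 0; 2; 2; 0; 0; 0; 0; 0; 0; 0];
  [:: 0; 0; 0; 0; 2; 2; 0; 0; 2; 0; 0];
  [:: 0; 1; 0; 0; 0; 0; 0; 1; 0; 1; 0];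
  [:: 0; 0; 0; 0; 0; 0; 2; 2; 0; 0; 2];
  [:: 0; 0; 0; 2; 0; 0; 2; 0; 2; 0; 0];
  [:: 0; 0; 0; 1; 0; 1; 0; 1; 0; 0; 0];
  [:: 2; 0; 0; 0; 0; 0; 0; 2; 0; 2; 0];
  [:: 0; 1; 0; 0; 0; 0; 0; 0; 0; 1; 1];
  [:: 1; 0; 0; 1; 1; 0; 0; 0; 0; 0; 0];
  [:: 1; 0; 1; 0; 0; 1; 0; 0; 0; 0; 0]].

Definition A_rows : seq (seq 'I_3) := map (map inZp) A_codes.
(* Swapping the symbols 1 and 2 is negation in Z/3. *)
Definition A'_rows : seq (seq 'I_3) := map (map (fun x => - x)%R) A_rows.
Definition B_rows : seq (seq 'I_3) := map (map inZp) B_codes.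

Lemma A_rows_admissible : rows_admissible 11 A_rows.
Proof. vm_cast_no_check (erefl true). Qed.

Lemma B_rows_admissible : rows_admissible 11 B_rows.
Proof. vm_cast_no_check (erefl true). Qed.

Lemma B_A_rows_zero_in : allrel zero_in_rows B_rows A_rows.
Proof. vm_cast_no_check (erefl true). Qed.

Lemma B_B_A_rows_good : all (fun u => allrel (good_at_rows u) B_rows A_rows) B_rows.
Proof. vm_cast_no_check (erefl true). Qed.

Lemma B_B_A'_rows_good : all (fun u => allrel (good_at_rows u) B_rows A'_rows) B_rows.
Proof. vm_cast_no_check (erefl true). Qed.

Lemma A'_B_A_rows_good : all (fun u => allrel (good_at_rows u) B_rows A_rows) A'_rows.
Proof. vm_cast_no_check (erefl true). Qed.

Lemma A_rows_weight : all (fun r => count (fun x => x != z0) r == 7) A_rows.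
Proof. vm_cast_no_check (erefl true). Qed.

Lemma B_rows_weight : all (fun r => count (fun x => x != z0) r == 3) B_rows.
Proof. vm_cast_no_check (erefl true). Qed.

Definition A11 : 'I_(size A_rows) -> vec 11 := @row_vec 11 A_rows.
Definition A11' (x : 'I_(size A_rows)) : vec 11 := (- A11 x)%R.
Definition B11 : 'I_(size B_rows) -> vec 11 := @row_vec 11 B_rows.

Lemma A11'_row x : A11' x = vec_of_row 11 (nth [::] A'_rows x).
Proof. by rewrite (nth_map [::]) ?vec_of_row_opp. Qed.

Lemma B11_zero_in j x : zero_in (B11 j) (A11 x) /\ zero_in (B11 j) (A11' x).
Proof.
have zBA : zero_in (B11 j) (A11 x).
  apply: zero_in_rowsP (row_size B_rows_admissible j) _.
  exact: allrel_nth B_A_rows_zero_in (ltn_ord j) (ltn_ord x).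
by split; last apply: zero_in_oppr.
Qed.

Lemma B11_pair_good j j' x :
  good_at (B11 j) (B11 j') (A11 x) /\ good_at (B11 j) (B11 j') (A11' x).
Proof.
have lt_x' : x < size A'_rows by rewrite [size A'_rows]size_map.
rewrite A11'_row; split; apply: good_at_rowsP (row_size B_rows_admissible j) _.
  have good_B := allP B_B_A_rows_good _ (mem_nth [::] (ltn_ord j)).
  exact: allrel_nth good_B (ltn_ord j') (ltn_ord x).
have good_B := allP B_B_A'_rows_good _ (mem_nth [::] (ltn_ord j)).
exact: allrel_nth good_B (ltn_ord j') lt_x'.
Qed.

Lemma B11_mid_good x j y : good_at (A11' x) (B11 j) (A11 y).
Proof.
have lt_x' : x < size A'_rows by rewrite [size A'_rows]size_map.
rewrite A11'_row; apply: good_at_rowsP.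
  by rewrite (nth_map [::]) // size_map (row_size A_rows_admissible).
exact: allrel_nth (allP A'_B_A_rows_good _ (mem_nth [::] lt_x')) (ltn_ord j) (ltn_ord y).
Qed.

Lemma weight_A11 x : weight (A11 x) = 7.
Proof.
rewrite weight_vec_of_row ?(row_size A_rows_admissible) //.
exact/eqP/(all_nthP [::] A_rows_weight).
Qed.

Lemma weight_B11 j : weight (B11 j) = 3.
Proof.
rewrite weight_vec_of_row ?(row_size B_rows_admissible) //.
exact/eqP/(all_nthP [::] B_rows_weight).
Qed.

Theorem lemma3p8 :
  exists T' : {set vec 1562},
    admissible T' /\
    #|T'| = 142 * 37 * 'C(11, 7) ^ 141 /\
    (forall t, t \in T' -> weight t = 990).
Proof.
have A11_adm := row_vec_admissible A_rows_admissible.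
have A11'_adm : admissible [set A11' x | x : 'I_(size A_rows)] := admissible_opp A11_adm.
have A11_inj := row_vec_inj A_rows_admissible.
have A11'_inj : injective A11' by move=> x y /oppr_inj /A11_inj.
exists (block_product 141 A11 A11' B11); split.
  exact: (block_product_admissible 141 A11_adm A11'_adm
    (row_vec_admissible B_rows_admissible) B11_zero_in B11_pair_good B11_mid_good).
split.
  have size_A : size A_rows = 'C(11, 7) by [].
  have size_B : size B_rows = 37 by [].
  apply: eq_trans (card_block_product 141 A11_inj A11'_inj
    (row_vec_inj B_rows_admissible) B11_zero_in) _.
  by rewrite size_A size_B.
have weight_A11' x : weight (A11' x) = 7 by rewrite weight_opp weight_A11.
move=> _ /imsetP[t _ ->].
exact: eq_trans (weight_glue t weight_A11 weight_A11' weight_B11) _.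
Qed.
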